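(* Let $L\in\mathbb N$, $L\ge2$, ${\bf A}\in\mathbb R^{M\times N}$, ${\bf b}\in\mathbb R^M$, and let $(r,{\bf u})$ follow the weight-normalized gradient flow with learning rates $\eta_r(t)=r(t)^2$, $\eta_{\bf u}=1$, with $r(0)>0$, ${\bf u}(0)>0$, $\|{\bf u}(0)\|_2=1$. Put ${\bf x}=\frac{r}{\|{\bf u}\|_2}{\bf u}$ and $\tilde{\bf x}={\bf x}^{\odot L}$. Define $F:\mathbb R_+^N\to\mathbb R$ by $F(\tilde{\bf x})=\frac12\langle\tilde{\bf x}\odot\log(\tilde{\bf x})-\tilde{\bf x},\mathbf 1\rangle$ if $L=2$ (with $0\log0=0$) and $F(\tilde{\bf x})=\frac{L}{2(2-L)}\langle\tilde{\bf x}^{\odot\frac2L},\mathbf 1\rangle$ if $L>2$, and its Bregman divergence $D_F({\bf p},{\bf q})=F({\bf p})-F({\bf q})-\langle\nabla F({\bf q}),{\bf p}-{\bf q}\rangle$. Then for every ${\bf z}\ge0$ with ${\bf A}{\bf z}={\bf b}$, $$\partial_t D_F({\bf z},\tilde{\bf x}(t))=-2L\,\|{\bf x}(t)\|_2^2\,\mathcal L({\bf x}(t)).$$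
   Context: $\odot$ denotes entrywise product/power, $\log$ acts entrywise, vector inequalities are entrywise, $\mathbf 1$ is the all-ones vector, $\mathbb R_+=[0,\infty)$. Loss: $\mathcal L({\bf x})=\frac{1}{2L}\|{\bf A}{\bf x}^{\odot L}-{\bf b}\|_2^2$. Weight-normalized loss $\tilde{\mathcal L}(r,{\bf u})=\mathcal L\big(\frac{r}{\|{\bf u}\|_2}{\bf u}\big)$. Weight-normalized gradient flow: $\partial_t r=-\eta_r\nabla_r\tilde{\mathcal L}(r,{\bf u})$, $\partial_t{\bf u}=-\eta_{\bf u}\nabla_{\bf u}\tilde{\mathcal L}(r,{\bf u})$, $r(0)=r_0$, ${\bf u}(0)={\bf u}_0$. *)

From HB Require Import structures.
From mathcomp Require Import all_boot all_order all_algebra.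
From mathcomp Require Import all_classical all_reals all_analysis.
Set Implicit Arguments. Unset Strict Implicit. Unset Printing Implicit Defensive.
Import Order.TTheory GRing.Theory Num.Theory.
Import numFieldNormedType.Exports.
Local Open Scope ring_scope.

Section Defs.
Variable R : realType.

Definition norm2 {N : nat} (v : 'cV[R]_N) : R := Num.sqrt (\sum_i v i 0 ^+ 2).

Definition epow {N : nat} (L : nat) (v : 'cV[R]_N) : 'cV[R]_N :=
  map_mx (fun a => a ^+ L) v.

Definition loss {M N : nat} (L : nat) (A : 'M[R]_(M, N)) (b : 'cV[R]_M)
  (x : 'cV[R]_N) : R :=
  (2 * L%:R)^-1 * \sum_j ((A *m epow L x - b) j 0) ^+ 2.

Definition wn {N : nat} (r : R) (u : 'cV[R]_N) : 'cV[R]_N := (r / norm2 u) *: u.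

Definition Ltilde {M N : nat} (L : nat) (A : 'M[R]_(M, N)) (b : 'cV[R]_M)
  (r : R) (u : 'cV[R]_N) : R := loss L A b (wn r u).

Definition partial {N : nat} (f : 'cV[R]_N -> R) (i : 'I_N) (v : 'cV[R]_N) : R :=
  derive1 (fun s : R => f (v + s *: delta_mx i 0)) 0.

Definition grad_r {M N : nat} (L : nat) (A : 'M[R]_(M, N)) (b : 'cV[R]_M)
  (r : R) (u : 'cV[R]_N) : R := derive1 (fun s : R => Ltilde L A b s u) r.

Definition grad_u {M N : nat} (L : nat) (A : 'M[R]_(M, N)) (b : 'cV[R]_M)
  (r : R) (u : 'cV[R]_N) (i : 'I_N) : R := partial (Ltilde L A b r) i u.

Definition xlogx (a : R) : R := if a == 0 then 0 else a * ln a.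

Definition Fpot {N : nat} (L : nat) (v : 'cV[R]_N) : R :=
  if L == 2%N then 2^-1 * \sum_i (xlogx (v i 0) - v i 0)
  else L%:R / (2 * (2 - L%:R)) * \sum_i powR (v i 0) (2 / L%:R).

Definition bregman {N : nat} (L : nat) (p q : 'cV[R]_N) : R :=
  Fpot L p - Fpot L q - \sum_i partial (Fpot L) i q * (p i 0 - q i 0).

End Defs.

(* - the u-gradient is orthogonal to u (the loss is invariant under rescaling
     of u), so ||u|| = 1 is preserved and x = r u;
   - on the unit sphere, r and every u_i solve linear equations f' = f k with
     continuous k, so they cannot reach 0: a continuous-induction argument
     shows r > 0, u > 0 and ||u|| = 1 for all times;
   - then x_i' = - r^2 x_i^(L-1) (A^T (A x^L - b))_i, and the potential F of
     the statement is separable with phi''(y^L) y^(2L-2) = 1/L, so the scalar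
     Bregman terms D_phi(z_i, x_i^L) change at rate
     r^2 (A^T (A x^L - b))_i (x_i^L - z_i); summing and using A z = b gives
     - r^2 ||A x^L - b||^2 = - 2 L ||x||^2 L(x). *)

From HB Require Import structures.
From mathcomp Require Import all_boot all_order all_algebra.
From mathcomp Require Import all_classical all_reals all_analysis.
From mathcomp Require Import ring lra.
Import Order.TTheory GRing.Theory Num.Theory.
Import numFieldNormedType.Exports.
Local Open Scope classical_set_scope.
Local Open Scope ring_scope.

(* The library states its differentiation rules for operations on functions
   ([f + g], [f * g], ...); these are the same rules for explicit lambda-terms,
   in the form [is_derive x 1 f df] used throughout the file. *)
Section PointwiseRules.
Context {R : realType}.
Implicit Types (f g : R -> R) (x df dg d : R).

Lemma drv_val {f x d} : is_derive x 1 f d -> derivable f x 1 /\ derive1 f x = d.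
Proof. by move=> H; split; [case: H|rewrite derive1E derive_val]. Qed.

Lemma drv_of {f x} : derivable f x 1 -> is_derive x 1 f (derive1 f x).
Proof. by move=> H; rewrite derive1E; apply: derivableP. Qed.

Lemma drv_ext {f g x df dg} : is_derive x 1 f df ->
  (forall s, f s = g s) -> df = dg -> is_derive x 1 g dg.
Proof. by move=> + /funext <- <-. Qed.

Lemma drv_cst (c x : R) : is_derive x 1 (fun _ : R => c) 0.
Proof. exact: is_derive_cst. Qed.

Lemma drv_id x : is_derive x 1 (fun s : R => s) 1.
Proof. exact: is_derive_id. Qed.

Lemma drv_add {f g x df dg} : is_derive x 1 f df -> is_derive x 1 g dg ->
  is_derive x 1 (fun s => f s + g s) (df + dg).
Proof. exact: is_deriveD. Qed.

Lemma drv_sub {f g x df dg} : is_derive x 1 f df -> is_derive x 1 g dg ->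
  is_derive x 1 (fun s => f s - g s) (df - dg).
Proof. exact: is_deriveB. Qed.

Lemma drv_opp {f x df} : is_derive x 1 f df -> is_derive x 1 (fun s => - f s) (- df).
Proof. exact: is_deriveN. Qed.

Lemma drv_mul {f g x df dg} : is_derive x 1 f df -> is_derive x 1 g dg ->
  is_derive x 1 (fun s => f s * g s) (f x * dg + g x * df).
Proof. exact: is_deriveM. Qed.

Lemma drv_scale (c : R) {f x df} : is_derive x 1 f df ->
  is_derive x 1 (fun s => c * f s) (c * df).
Proof. exact: is_deriveZ. Qed.

(* Not a restatement of [is_deriveX]: [f ^+ n] is not convertible to
   [fun s => f s ^+ n] for a variable [n]. *)
Lemma drv_pow {f x df} n : is_derive x 1 f df ->
  is_derive x 1 (fun s => f s ^+ n) (n%:R * f x ^+ n.-1 * df).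
Proof.
move=> H; elim: n => [|n IH].
  by eapply drv_ext; [exact: (drv_cst 1 x)| |] => [s|]; rewrite ?expr0 ?mul0r.
eapply drv_ext; [exact: (drv_mul H IH)| |] => [s|]; first by rewrite exprS.
by case: n {IH} => [|n]; rewrite /= ?expr0 -?natr1 ?exprS; ring.
Qed.

Lemma drv_sum {n} {h : 'I_n -> R -> R} {x} {dh : 'I_n -> R} :
  (forall i, is_derive x 1 (h i) (dh i)) ->
  is_derive x 1 (fun s => \sum_(i < n) h i s) (\sum_(i < n) dh i).
Proof.
move=> H; have := is_derive_sum H.
by rewrite (_ : \sum_(i < n) h i = (fun s => \sum_(i < n) h i s)) //;
  apply/funext => s; rewrite fct_sumE.
Qed.

Lemma drv_comp {f g x df dg} : is_derive (g x) 1 f df -> is_derive x 1 g dg ->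
  is_derive x 1 (fun s => f (g s)) (df * dg).
Proof. exact: is_derive1_comp. Qed.

Lemma drv_inv {f x df} : f x != 0 -> is_derive x 1 f df ->
  is_derive x 1 (fun s => (f s)^-1) (- (f x) ^- 2 * df).
Proof. exact: is_deriveV. Qed.

Lemma drv_near {f g x df} : (\forall s \near x, f s = g s) ->
  is_derive x 1 f df -> is_derive x 1 g df.
Proof. exact: near_eq_is_derive. Qed.

End PointwiseRules.

Ltac drv_ext H := eapply drv_ext; [exact: H| |].

Section RealAnalysis.
Context {R : realType}.

Lemma derivable_cont {f : R -> R} {c : R} :
  derivable f c 1 -> {for c, continuous f}.
Proof. by move=> H; apply/differentiable_continuous; rewrite -derivable1_diffP. Qed.

Lemma near_gt0 {f : R -> R} {c : R} : {for c, continuous f} -> 0 < f c ->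
  \forall s \near c, 0 < f s.
Proof. by move=> H fc; exact: (@cvgr_gt R R (nbhs c) _ f (f c) H 0 fc). Qed.

Lemma near_pos (a : R) : 0 < a -> \forall s \near a, 0 < s.
Proof. exact: (@near_gt0 id a cvg_id). Qed.

Lemma derive0_const (f : R -> R) (a c : R) : a <= c ->
  {within `[a, c], continuous f} ->
  (forall s, a < s < c -> is_derive s 1 f 0) -> f c = f a.
Proof.
move=> ac cf H.
have Hd x : x \in `]a, c[%R -> is_derive x 1 f ((fun _ => 0 : R) x).
  by rewrite in_itv /= => /H.
have [x _] := MVT_segment ac Hd cf.
by rewrite mul0r => /eqP; rewrite subr_eq0 => /eqP.
Qed.

Lemma positivity_persists (f k : R -> R) (a c : R) : a < c ->
  {within `[a, c], continuous f} -> {within `[a, c], continuous k} ->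
  (forall s, a < s < c -> is_derive s 1 f (f s * k s)) ->
  (forall s, a <= s < c -> 0 < f s) -> 0 < f c.
Proof.
move=> ac cf ck Hd Hp.
have [m mi km] := EVT_min (ltW ac) ck.
(* [g = f exp(- k(m) s)] is nondecreasing since [k >= k m] on the segment. *)
pose g s := f s * expR (- k m * s).
have Hexp (s : R) :
    is_derive s 1 (fun t => expR (- k m * t)) (expR (- k m * s) * (- k m * 1)).
  exact: (drv_comp (is_derive_expR _) (drv_scale (- k m) (drv_id s))).
have Hg (s : R) : a < s < c -> is_derive s 1 g (f s * expR (- k m * s) * (k s - k m)).
  by move=> sac; drv_ext (drv_mul (Hd s sac) (Hexp s)) => //=; ring.
have gc : {within `[a, c], continuous g}.
  move=> x; apply: (@continuousM R _ (from_subspace `[a, c] f)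
    (from_subspace `[a, c] (fun s => expR (- k m * s))) x); first exact: cf.
  by apply: continuous_subspaceT => y; apply: derivable_cont; case: (Hexp y).
have gle : g a <= g c.
  apply: (@ger0_derive1_le_cc R g a c) => [x|x xi||||]; last exact: ltW.
  - by rewrite in_itv /= => /Hg [].
  - have [_ ->] := drv_val (Hg x xi); case/andP: xi => ax xc.
    rewrite mulr_ge0 // ?subr_ge0; last by apply: km; rewrite in_itv /= !ltW.
    by rewrite ltW // mulr_gt0 ?expR_gt0 // Hp // ltW // ax.
  - exact: gc.
  - by rewrite in_itv /= lexx ltW.
  - by rewrite in_itv /= lexx ltW.
have ga : 0 < g a by rewrite /g mulr_gt0 ?expR_gt0 // Hp // lexx ac.
by move: (lt_le_trans ga gle); rewrite /g pmulr_lgt0 // expR_gt0.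
Qed.

Lemma continuous_induction (P : R -> Prop) :
  P 0 ->
  (forall c, 0 <= c -> P c -> \forall s \near c^'+, P s) ->
  (forall c, 0 < c -> (forall s, 0 <= s < c -> P s) -> P c) ->
  forall t, 0 <= t -> P t.
Proof.
move=> P0 Pright Pleft t t0; apply: contrapT => nPt.
pose E := [set s : R | 0 <= s /\ forall s', 0 <= s' <= s -> P s'].
have E0 : E 0.
  split=> // s' /andP[s'0 s'le].
  by have -> : s' = 0 by apply/le_anti; rewrite s'0 s'le.
have ubE : ubound E t.
  move=> s [_ Es]; rewrite leNgt; apply/negP => ts.
  by apply: nPt; apply: Es; rewrite t0 ltW.
have hE : has_sup E by split; [exists 0 | exists t].
set c := sup E.
have c0 : 0 <= c by apply: sup_upper_bound.
have Pbelow s : 0 <= s < c -> P s.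
  case/andP=> s0 sc; have eps0 : 0 < c - s by rewrite subr_gt0.
  have [e [_ Ee] lt] := sup_adherent eps0 hE.
  by apply: Ee; rewrite s0 ltW //; move: lt; rewrite opprB addrCA subrr addr0.
have Pc : P c.
  by case: (eqVneq c 0) => [->|cn0] //; apply: Pleft; rewrite // lt_neqAle eq_sym cn0.
have /nbhs_ballP [d d0 Hd] := Pright c c0 Pc.
have Ecd : E (c + d / 2).
  split=> [|s /andP[s0 sle]]; first by rewrite addr_ge0 // ltW // divr_gt0.
  case: (ltgtP s c) => [sc|cs|->] //; first by apply: Pbelow; rewrite s0.
  apply: Hd => //; rewrite /ball /= ltr0_norm ?subr_lt0 // opprB ltrBlDl.
  by rewrite (le_lt_trans sle) // ltrD2l ltr_pdivrMr // ltr_pMr // ltr1n.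
have d2 : 0 < d / 2 by rewrite divr_gt0.
have := sup_upper_bound hE Ecd; rewrite -/c; lra.
Qed.

End RealAnalysis.

Lemma sum_mul_delta {R : realType} {N : nat} (f : 'I_N -> R) (i : 'I_N) :
  \sum_j f j * (delta_mx i 0 : 'cV[R]_N) j 0 = f i.
Proof.
rewrite (bigD1 i) //= big1 ?addr0; first by rewrite mxE !eqxx mulr1.
by move=> j /negbTE ji; rewrite mxE ji mulr0.
Qed.

Lemma delta_mx_sym {R : realType} {N : nat} (i k : 'I_N) :
  (delta_mx i 0 : 'cV[R]_N) k 0 = (delta_mx k 0 : 'cV[R]_N) i 0.
Proof. by rewrite !mxE eq_sym. Qed.

Section LossGradient.
Context {R : realType} {M N : nat} (L : nat) (A : 'M[R]_(M, N)) (b : 'cV[R]_M).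

Definition residual (x : 'cV[R]_N) (j : 'I_M) : R :=
  \sum_k A j k * x k 0 ^+ L - b j 0.

Definition backprop (x : 'cV[R]_N) (k : 'I_N) : R := \sum_j A j k * residual x j.

Lemma residualE x j : (A *m epow L x - b) j 0 = residual x j.
Proof. by rewrite !mxE; congr (_ - _); apply: eq_bigr => k _; rewrite mxE. Qed.

Lemma lossE x : loss L A b x = (2 * L%:R)^-1 * \sum_j residual x j ^+ 2.
Proof. by rewrite /loss; congr (_ * _); apply: eq_bigr => j _; rewrite residualE. Qed.

Lemma residual_derive {y : R -> 'cV[R]_N} {s0 : R} {dy : 'I_N -> R} (j : 'I_M) :
  (forall k, is_derive s0 1 (fun s => y s k 0) (dy k)) ->
  is_derive s0 1 (fun s => residual (y s) j)
     (\sum_k A j k * (L%:R * y s0 k 0 ^+ L.-1 * dy k)).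
Proof.
move=> Hy; drv_ext (drv_sub (drv_sum (fun k => drv_scale (A j k) (drv_pow L (Hy k))))
  (drv_cst (b j 0) s0)) => //.
by rewrite subr0.
Qed.

Lemma loss_derive {y : R -> 'cV[R]_N} {s0 : R} {dy : 'I_N -> R} : (0 < L)%N ->
  (forall k, is_derive s0 1 (fun s => y s k 0) (dy k)) ->
  is_derive s0 1 (fun s => loss L A b (y s))
     (\sum_k y s0 k 0 ^+ L.-1 * backprop (y s0) k * dy k).
Proof.
move=> L0 Hy.
drv_ext (drv_scale (2 * L%:R)^-1 (drv_sum (fun j => drv_pow 2 (residual_derive j Hy)))).
  by move=> s; rewrite lossE.
have L0' : (L%:R : R) != 0 by rewrite pnatr_eq0 -lt0n.
rewrite big_distrr /=.
under eq_bigr do rewrite big_distrr /= big_distrr /=.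
rewrite exchange_big /=; apply: eq_bigr => k _.
rewrite /backprop big_distrr /= big_distrl /=; apply: eq_bigr => j _.
by field.
Qed.

Lemma backprop_derivable {y : R -> 'cV[R]_N} {s0 : R} (k : 'I_N) :
  (forall j, derivable (fun s => y s j 0) s0 1) ->
  derivable (fun s => backprop (y s) k) s0 1.
Proof.
move=> Hy; have Hy' j := drv_of (Hy j).
by case: (drv_sum (fun j => drv_scale (A j k) (residual_derive j Hy'))).
Qed.

Lemma backprop_pairing (x z : 'cV[R]_N) : A *m z = b ->
  \sum_k backprop x k * (x k 0 ^+ L - z k 0) = \sum_j residual x j ^+ 2.
Proof.
move=> Az; under eq_bigr do rewrite big_distrl /=.
rewrite exchange_big /=; apply: eq_bigr => j _.
have Hb : \sum_k A j k * z k 0 = b j 0 by rewrite -Az mxE.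
rewrite expr2 {2}/residual -Hb -sumrB big_distrl /=; apply: eq_bigr => k _.
ring.
Qed.

End LossGradient.

Section WNGradients.
Context {R : realType} {M N : nat} (L : nat) (A : 'M[R]_(M, N)) (b : 'cV[R]_M).
Hypothesis L0 : (0 < L)%N.

Lemma wnE (r : R) (u : 'cV[R]_N) k : wn r u k 0 = r / norm2 u * u k 0.
Proof. by rewrite /wn mxE. Qed.

Lemma norm2_sqr (u : 'cV[R]_N) : norm2 u ^+ 2 = \sum_i u i 0 ^+ 2.
Proof. by rewrite /norm2 sqr_sqrtr // sumr_ge0 // => i _; rewrite sqr_ge0. Qed.

Lemma norm2Z_sqr (a : R) (u : 'cV[R]_N) : norm2 (a *: u) ^+ 2 = a ^+ 2 * norm2 u ^+ 2.
Proof. by rewrite !norm2_sqr big_distrr; apply: eq_bigr => i _; rewrite mxE exprMn. Qed.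

Lemma grad_r_formula (r : R) (u : 'cV[R]_N) : grad_r L A b r u =
  \sum_k (wn r u k 0) ^+ L.-1 * backprop L A b (wn r u) k * (u k 0 / norm2 u).
Proof.
have Hx k : is_derive r 1 (fun s : R => wn s u k 0) (u k 0 / norm2 u).
  drv_ext (drv_scale (u k 0 / norm2 u) (drv_id r)); last by rewrite mulr1.
  by move=> s; rewrite wnE; ring.
by have [_ <-] := drv_val (loss_derive L A b L0 Hx).
Qed.

Lemma norm2_derive (u : 'cV[R]_N) i : 0 < norm2 u ->
  is_derive (0:R) 1 (fun e : R => norm2 (u + e *: delta_mx i 0)) (u i 0 / norm2 u).
Proof.
move=> n0; pose d j := (delta_mx i 0 : 'cV[R]_N) j 0.
have Hsq : is_derive (0:R) 1 (fun e : R => \sum_j (u j 0 + e * d j) ^+ 2)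
    (\sum_j (2%:R * (u j 0 + 0 * d j) ^+ 1 * (0 + (0 * 0 + d j * 1)))).
  apply: drv_sum => j.
  exact: (drv_pow 2 (drv_add (drv_cst (u j 0) 0) (drv_mul (drv_id 0) (drv_cst (d j) 0)))).
have sq : \sum_j (u j 0 + 0 * d j) ^+ 2 = norm2 u ^+ 2.
  by rewrite norm2_sqr; apply: eq_bigr => j _; rewrite mul0r addr0.
have sq0 : 0 < \sum_j (u j 0 + 0 * d j) ^+ 2 by rewrite sq exprn_gt0.
drv_ext (drv_comp (is_derive1_sqrt sq0) Hsq).
  by move=> e /=; rewrite /norm2; congr (Num.sqrt _); apply: eq_bigr => j _; rewrite /d !mxE.
rewrite sq sqrtr_sqr gtr0_norm //.
have -> : \sum_j 2%:R * (u j 0 + 0 * d j) ^+ 1 * (0 + (0 * 0 + d j * 1)) = 2 * u i 0.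
  rewrite -(sum_mul_delta (fun j => u j 0) i) big_distrr /=.
  by apply: eq_bigr => j _; rewrite /d; ring.
by field; rewrite gt_eqF.
Qed.

Lemma grad_u_formula (r : R) (u : 'cV[R]_N) i : 0 < norm2 u ->
  grad_u L A b r u i =
  \sum_k (wn r u k 0) ^+ L.-1 * backprop L A b (wn r u) k *
     (r * ((delta_mx i 0 : 'cV[R]_N) k 0 / norm2 u - u i 0 * u k 0 / norm2 u ^+ 3)).
Proof.
move=> n0; set n := norm2 u; pose d j := (delta_mx i 0 : 'cV[R]_N) j 0.
have Hn0 : norm2 (u + 0 *: delta_mx i 0) != 0 by rewrite scale0r addr0 gt_eqF.
have Hx k : is_derive (0:R) 1 (fun e : R => wn r (u + e *: delta_mx i 0) k 0)
    (r * (d k / n - u i 0 * u k 0 / n ^+ 3)).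
  have Huk := drv_add (drv_cst (u k 0) 0) (drv_mul (drv_id 0) (drv_cst (d k) 0)).
  have Hinv := @drv_inv _ (fun e : R => norm2 (u + e *: delta_mx i 0)) 0 _ Hn0
                 (norm2_derive u i n0).
  drv_ext (drv_scale r (drv_mul Hinv Huk)).
    by move=> e /=; rewrite wnE /d !mxE; ring.
  by rewrite /= scale0r addr0 -/n; field; rewrite gt_eqF.
have [_] := drv_val (loss_derive L A b L0 Hx).
by rewrite scale0r addr0 => <-.
Qed.

(* [Ltilde] is invariant under rescaling of [u], so its [u]-gradient is
   orthogonal to [u]; this is why the flow stays on the unit sphere. *)
Lemma grad_u_tangent (r : R) (u : 'cV[R]_N) : 0 < norm2 u ->
  \sum_i u i 0 * grad_u L A b r u i = 0.
Proof.
move=> n0; set n := norm2 u.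
pose X k := (wn r u k 0) ^+ L.-1 * backprop L A b (wn r u) k.
under eq_bigr => i _ do rewrite grad_u_formula // big_distrr /=.
rewrite exchange_big /=; apply: big1 => k _.
have -> : \sum_i u i 0 * (X k * (r * ((delta_mx i 0 : 'cV[R]_N) k 0 / n
                                      - u i 0 * u k 0 / n ^+ 3)))
    = X k * r * \sum_i (u i 0 * (delta_mx k 0 : 'cV[R]_N) i 0 / n
                        - u i 0 ^+ 2 * (u k 0 / n ^+ 3)).
  by rewrite big_distrr /=; apply: eq_bigr => i _; rewrite delta_mx_sym; ring.
rewrite sumrB -!big_distrl /= sum_mul_delta -norm2_sqr -/n.
by field; rewrite gt_eqF.
Qed.

Definition radial (r : R) (u : 'cV[R]_N) : R :=
  \sum_k (r * u k 0) ^+ L.-1 * backprop L A b (r *: u) k * u k 0.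

Lemma wn_sphere (r : R) (u : 'cV[R]_N) : norm2 u = 1 -> wn r u = r *: u.
Proof. by rewrite /wn => ->; rewrite divr1. Qed.

Lemma grad_r_sphere (r : R) (u : 'cV[R]_N) : norm2 u = 1 ->
  grad_r L A b r u = radial r u.
Proof.
move=> n1; rewrite grad_r_formula wn_sphere // n1.
by apply: eq_bigr => k _; rewrite divr1 mxE.
Qed.

Lemma grad_u_sphere (r : R) (u : 'cV[R]_N) i : norm2 u = 1 ->
  grad_u L A b r u i =
  r * ((r * u i 0) ^+ L.-1 * backprop L A b (r *: u) i - u i 0 * radial r u).
Proof.
move=> n1; rewrite grad_u_formula ?n1 ?ltr01 // wn_sphere //.
pose X k := (r * u k 0) ^+ L.-1 * backprop L A b (r *: u) k.
rewrite (eq_bigr (fun k => r * X k * (delta_mx i 0 : 'cV[R]_N) k 0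
                           - r * u i 0 * (X k * u k 0))); last first.
  by move=> k _; rewrite mxE expr1n !divr1 /X; ring.
rewrite sumrB sum_mul_delta -big_distrr /= /radial.
by rewrite /X; ring.
Qed.

End WNGradients.

Section Potential.
Context {R : realType} (L : nat).

Definition phi_coef : R := L%:R / (2 * (2 - L%:R)).
Definition phi_exp : R := 2 / L%:R.

Definition phi (a : R) : R :=
  if L == 2%N then 2^-1 * (xlogx a - a) else phi_coef * powR a phi_exp.
Definition dphi (a : R) : R :=
  if L == 2%N then 2^-1 * ln a else phi_coef * (phi_exp * powR a (phi_exp - 1)).
Definition ddphi (a : R) : R :=
  if L == 2%N then 2^-1 * a^-1
  else phi_coef * (phi_exp * ((phi_exp - 1) * powR a (phi_exp - 1 - 1))).

Lemma Fpot_sum {N} (q : 'cV[R]_N) : Fpot L q = \sum_i phi (q i 0).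
Proof. by rewrite /Fpot /phi; case: ifP => _; rewrite big_distrr. Qed.

Lemma phi_derive (a : R) : 0 < a -> is_derive a 1 phi (dphi a).
Proof.
move=> a0; rewrite /phi /dphi; case: ifP => _; last first.
  exact/drv_scale/is_derive1_powR.
have H := drv_scale (2^-1 : R) (drv_sub (drv_mul (drv_id a) (is_derive1_ln a0)) (drv_id a)).
rewrite mulfV ?gt_eqF // mulr1 addrC addKr in H.
apply: drv_near H; near=> s; rewrite /xlogx gt_eqF //.
by near: s; exact: near_pos.
Unshelve. all: by end_near. Qed.

Lemma dphi_derive (a : R) : 0 < a -> is_derive a 1 dphi (ddphi a).
Proof.
move=> a0; rewrite /dphi /ddphi; case: ifP => _.
  exact: (drv_scale (2^-1 : R) (is_derive1_ln a0)).
exact/drv_scale/drv_scale/is_derive1_powR.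
Qed.

(* The identity behind the theorem: the Hessian of [phi] at [y^L] exactly
   compensates the factor [y^(L-1)] that appears twice in the flow of [y^L]. *)
Lemma ddphi_pow (y : R) : (2 <= L)%N -> 0 < y ->
  ddphi (y ^+ L) * (y ^+ L.-1 * y ^+ L.-1) = L%:R^-1.
Proof.
move=> L2 y0; rewrite -exprD /ddphi; case: ifP => [/eqP ->|L2'].
  by rewrite /= -mulrA mulVf ?mulr1 // expf_neq0 // gt_eqF.
have L3 : (2 < L)%N by rewrite ltn_neqAle eq_sym L2' L2.
have Ln0 : (L%:R : R) != 0 by rewrite pnatr_eq0 -lt0n (ltn_trans _ L3).
have L2n0 : (2 - L%:R : R) != 0 by rewrite subr_eq0 lt_eqF // (ltr_nat R 2 L).
rewrite -!powR_mulrn ?ltW // -powRrM -!mulrA -powRD; last first.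
  by apply/implyP => _; rewrite gt_eqF.
have -> : L%:R * (phi_exp - 1 - 1) + (L.-1 + L.-1)%:R = 0 :> R.
  have L1 : (L.-1)%:R = L%:R - 1 :> R.
    by rewrite -[in RHS](prednK (ltnW L2)) -natr1 addrK.
  by rewrite natrD L1 /phi_exp; field.
by rewrite powRr0 mulr1 /phi_coef /phi_exp; field; rewrite Ln0 L2n0.
Qed.

Lemma partial_Fpot {N} (q : 'cV[R]_N) i : (forall j, 0 < q j 0) ->
  partial (Fpot L) i q = dphi (q i 0).
Proof.
move=> q0; pose d j := (delta_mx i 0 : 'cV[R]_N) j 0.
have H : is_derive (0:R) 1 (fun s : R => \sum_j phi (q j 0 + s * d j))
   (\sum_j (dphi (q j 0) * (0 + (0 * 0 + d j * 1)))).
  apply: drv_sum => j.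
  have Hq : is_derive (q j 0 + 0 * d j) 1 phi (dphi (q j 0)).
    by rewrite mul0r addr0; apply: phi_derive.
  exact: (@drv_comp _ phi (fun s => q j 0 + s * d j) _ _ _ Hq
           (drv_add (drv_cst _ _) (drv_mul (drv_id _) (drv_cst _ _)))).
transitivity (derive1 (fun s : R => \sum_j phi (q j 0 + s * d j)) 0).
  rewrite /partial; congr (derive1 _ 0); apply/funext => s.
  by rewrite Fpot_sum; apply: eq_bigr => j _; rewrite /d !mxE.
have [_ ->] := drv_val H.
rewrite -(sum_mul_delta (fun j => dphi (q j 0)) i); apply: eq_bigr => j _.
by rewrite /d; ring.
Qed.

Definition breg (p q : R) : R := phi p - phi q - dphi q * (p - q).

Lemma bregman_sum {N} (p q : 'cV[R]_N) : (forall i, 0 < q i 0) ->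
  bregman L p q = \sum_i breg (p i 0) (q i 0).
Proof.
move=> q0; rewrite /bregman !Fpot_sum -!sumrB; apply: eq_bigr => i _.
by rewrite partial_Fpot.
Qed.

Lemma breg_derive (p : R) (q : R -> R) (t dq : R) : 0 < q t ->
  is_derive t 1 q dq ->
  is_derive t 1 (fun s => breg p (q s)) (ddphi (q t) * dq * (q t - p)).
Proof.
move=> q0 Hq.
have Hphi := drv_comp (phi_derive _ q0) Hq.
have Hdphi := drv_comp (dphi_derive _ q0) Hq.
drv_ext (drv_sub (drv_sub (drv_cst (phi p) t) Hphi)
                 (drv_mul Hdphi (drv_sub (drv_cst p t) Hq))) => //.
by rewrite /=; ring.
Qed.

End Potential.

Section Flow.
Context {R : realType} {M N : nat} (L : nat) (A : 'M[R]_(M, N)) (b : 'cV[R]_M)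
  (r : R -> R) (u : R -> 'cV[R]_N).
Hypothesis L2 : (2 <= L)%N.
Hypothesis Hr : forall t : R, 0 < t ->
  derivable r t 1 /\ derive1 r t = - (r t ^+ 2 * grad_r L A b (r t) (u t)).
Hypothesis Hu : forall t : R, 0 < t -> forall i : 'I_N,
  derivable (fun s => u s i 0) t 1 /\
  derive1 (fun s => u s i 0) t = - grad_u L A b (r t) (u t) i.

Let L0 : (0 < L)%N. Proof. exact: ltnW. Qed.

Definition sqnorm (s : R) : R := \sum_i u s i 0 ^+ 2.

(* On the unit sphere, [r] and each [u_i] solve linear equations
   [r' = r * radius_rate] and [u_i' = u_i * coord_rate i]. *)
Definition radius_rate (s : R) : R := - (r s * radial L A b (r s) (u s)).
Definition coord_rate (i : 'I_N) (s : R) : R :=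
  - (r s ^+ L * u s i 0 ^+ (L - 2) * backprop L A b (r s *: u s) i)
  + r s * radial L A b (r s) (u s).

Lemma r_derive {s : R} : 0 < s ->
  is_derive s 1 r (- (r s ^+ 2 * grad_r L A b (r s) (u s))).
Proof. by move=> s0; have [Dr <-] := Hr _ s0; exact: drv_of. Qed.

Lemma u_derive {s : R} i : 0 < s ->
  is_derive s 1 (fun t => u t i 0) (- grad_u L A b (r s) (u s) i).
Proof. by move=> s0; have [Du <-] := Hu _ s0 i; exact: drv_of. Qed.

Lemma norm2_sqnorm (s : R) : norm2 (u s) = Num.sqrt (sqnorm s).
Proof. by []. Qed.

Lemma sqnorm_derive (s : R) : 0 < s -> 0 < norm2 (u s) -> is_derive s 1 sqnorm 0.
Proof.
move=> s0 n0; drv_ext (drv_sum (fun k => drv_pow 2 (u_derive k s0))) => //.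
rewrite (eq_bigr (fun k => -2 * (u s k 0 * grad_u L A b (r s) (u s) k))); last first.
  by move=> k _; rewrite /=; ring.
by rewrite -big_distrr /= grad_u_tangent ?mulr0.
Qed.

(* The linear form of the flow on the unit sphere; [L >= 2] makes
   [x_i^(L-1) = u_i * r^(L-1) u_i^(L-2)] a multiple of [u_i]. *)
Lemma sphere_rates (s : R) : 0 < s -> sqnorm s = 1 ->
  is_derive s 1 r (r s * radius_rate s) /\
  forall i, is_derive s 1 (fun t => u t i 0) (u s i 0 * coord_rate i s).
Proof.
move=> s0 S1; have n1 : norm2 (u s) = 1 by rewrite norm2_sqnorm S1 sqrtr1.
split; first by drv_ext (r_derive s0) => //; rewrite grad_r_sphere // /radius_rate; ring.
move=> i; drv_ext (u_derive i s0) => //.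
rewrite grad_u_sphere // /coord_rate.
case: L L2 => [|[|l]] // _.
by rewrite /= subn2 /= !exprS !exprMn; ring.
Qed.

Lemma product_derive {s : R} i : 0 < s -> sqnorm s = 1 ->
  is_derive s 1 (fun t => r t * u t i 0)
    (- r s ^+ 2 * (r s * u s i 0) ^+ L.-1 * backprop L A b (r s *: u s) i).
Proof.
move=> s0 S1; have n1 : norm2 (u s) = 1 by rewrite norm2_sqnorm S1 sqrtr1.
drv_ext (drv_mul (r_derive s0) (u_derive i s0)) => //.
by rewrite grad_r_sphere // grad_u_sphere //; ring.
Qed.

Lemma product_derivable {s : R} j : 0 < s ->
  derivable (fun t => (r t *: u t) j 0) s 1.
Proof.
move=> s0; have [Dr _] := Hr _ s0; have [Du _] := Hu _ s0 j.
have -> : (fun t => (r t *: u t) j 0) = (fun t => r t * u t j 0).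
  by apply/funext => t; rewrite mxE.
by case: (drv_mul (drv_of Dr) (drv_of Du)).
Qed.

Lemma radial_derivable (s : R) : 0 < s ->
  derivable (fun t => radial L A b (r t) (u t)) s 1.
Proof.
move=> s0; have [Dr _] := Hr _ s0.
have Dx k := drv_mul (drv_of Dr) (drv_of (proj1 (Hu _ s0 k))).
have Db k := drv_of (backprop_derivable L A b k (fun j => product_derivable j s0)).
by case: (drv_sum (fun k => drv_mul (drv_mul (drv_pow L.-1 (Dx k)) (Db k))
                                    (drv_of (proj1 (Hu _ s0 k))))).
Qed.

Lemma radius_rate_derivable (s : R) : 0 < s -> derivable radius_rate s 1.
Proof.
move=> s0; have [Dr _] := Hr _ s0.
by case: (drv_opp (drv_mul (drv_of Dr) (drv_of (radial_derivable _ s0)))).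
Qed.

Lemma coord_rate_derivable (s : R) i : 0 < s -> derivable (coord_rate i) s 1.
Proof.
move=> s0; have [Dr _] := Hr _ s0; have [Du _] := Hu _ s0 i.
have Db := drv_of (backprop_derivable L A b i (fun j => product_derivable j s0)).
by case: (drv_add (drv_opp (drv_mul (drv_mul (drv_pow L (drv_of Dr))
   (drv_pow (L - 2) (drv_of Du))) Db)) (drv_mul (drv_of Dr) (drv_of (radial_derivable _ s0)))).
Qed.

(* Each scalar Bregman term [D_phi(p, x_i^L)] decreases at rate
   [r^2 (A^T (A x^L - b))_i (x_i^L - p)]: the Hessian of [phi] cancels the
   factors [x_i^(L-1)] of the flow. *)
Lemma breg_flow_derive (p : R) {t : R} i : 0 < t -> sqnorm t = 1 ->
  0 < r t -> 0 < u t i 0 ->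
  is_derive t 1 (fun s => breg L p (epow L (r s *: u s) i 0))
    (- r t ^+ 2 * (backprop L A b (r t *: u t) i * (epow L (r t *: u t) i 0 - p))).
Proof.
move=> t0 S1 rt ut; set x := r t * u t i 0.
have x0 : 0 < x by rewrite mulr_gt0.
have Dx := drv_pow L (product_derive i t0 S1).
have Dl : is_derive t 1 (fun s => epow L (r s *: u s) i 0) (L%:R * x ^+ L.-1 *
    (- r t ^+ 2 * x ^+ L.-1 * backprop L A b (r t *: u t) i)).
  by drv_ext Dx => [s|]; rewrite // !mxE.
have xL : epow L (r t *: u t) i 0 = x ^+ L by rewrite !mxE.
have Ln0 : (L%:R : R) != 0 by rewrite pnatr_eq0 -lt0n.
have xL0 : 0 < epow L (r t *: u t) i 0 by rewrite xL exprn_gt0.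
drv_ext (breg_derive L p _ _ _ xL0 Dl) => //.
rewrite /= !xL; transitivity (- r t ^+ 2 * backprop L A b (r t *: u t) i * (x ^+ L - p) *
  (L%:R * (ddphi L (x ^+ L) * (x ^+ L.-1 * x ^+ L.-1)))); first by ring.
by rewrite ddphi_pow // mulfV // mulr1; ring.
Qed.

End Flow.

Section Invariant.
Context {R : realType} {M N : nat} (L : nat) (A : 'M[R]_(M, N)) (b : 'cV[R]_M)
  (r : R -> R) (u : R -> 'cV[R]_N).
Hypothesis L2 : (2 <= L)%N.
Hypothesis Hr : forall t : R, 0 < t ->
  derivable r t 1 /\ derive1 r t = - (r t ^+ 2 * grad_r L A b (r t) (u t)).
Hypothesis Hu : forall t : R, 0 < t -> forall i : 'I_N,
  derivable (fun s => u s i 0) t 1 /\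
  derive1 (fun s => u s i 0) t = - grad_u L A b (r t) (u t) i.
Hypothesis Hr0 : r x @[x --> 0^'+] --> r 0.
Hypothesis Hu0 : forall i : 'I_N, u x i 0 @[x --> 0^'+] --> u 0 i 0.
Hypothesis r0 : 0 < r 0.
Hypothesis u0 : forall i : 'I_N, 0 < u 0 i 0.
Hypothesis un : norm2 (u 0) = 1.

Definition positive_state (s : R) : Prop := 0 < r s /\ forall i, 0 < u s i 0.

(* A unit vector [u 0] exists only in positive dimension. *)
Lemma dim_gt0 : (0 < N)%N.
Proof.
case: N u u0 un => [|n] //= u' _; rewrite /norm2 big_ord0 sqrtr0 => /eqP.
by rewrite eq_sym oner_eq0.
Qed.

Lemma positive_norm2 (s : R) : positive_state s -> 0 < norm2 (u s).
Proof.
move=> [_ us]; rewrite norm2_sqnorm sqrtr_gt0 /sqnorm (bigD1 (Ordinal dim_gt0)) //=.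
by rewrite ltr_pwDl ?exprn_gt0 // sumr_ge0 // => i _; rewrite sqr_ge0.
Qed.

Lemma sqnorm_at0 : sqnorm u 0 = 1.
Proof. by rewrite /sqnorm -norm2_sqr un expr1n. Qed.

Lemma sqnorm_cvg0 : sqnorm u x @[x --> 0^'+] --> sqnorm u 0.
Proof.
rewrite /sqnorm; apply: (@cvg_big _ _ +%R 0 xpredT add_continuous) => i _.
under eq_cvg do rewrite expr2.
by rewrite expr2; exact: (cvgM (Hu0 i) (Hu0 i)).
Qed.

(* Positivity propagates to the right: by right-continuity at [0], by
   continuity at later times. *)
Lemma positive_right (c : R) : 0 <= c -> positive_state c ->
  \forall s \near c^'+, positive_state s.
Proof.
rewrite le_eqVlt => /predU1P[<- _|c0 [rc uc]].
  have Hr' := @cvgr_gt R R _ _ r (r 0) Hr0 0 r0.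
  have Hu' := filter_forall _ (fun i => @cvgr_gt R R _ _ (fun x => u x i 0) _ (Hu0 i) 0 (u0 i)).
  by near=> x; split; [near: x; exact: Hr'|near: x; exact: Hu'].
have Hr' := near_gt0 (derivable_cont (proj1 (Hr _ c0))) rc.
have Hu' := filter_forall _ (fun i => near_gt0 (derivable_cont (proj1 (Hu _ c0 i))) (uc i)).
have Hnear : \forall s \near c, positive_state s.
  by near=> x; split; [near: x; exact: Hr'|near: x; exact: Hu'].
by apply: filterS Hnear => s Ps _.
Unshelve. all: by end_near. Qed.

Lemma sphere_before (c : R) : 0 < c ->
  (forall s, 0 <= s < c -> positive_state s) -> sqnorm u c = 1.
Proof.
move=> c0 Pbelow.
have Dsq x : 0 < x -> derivable (sqnorm u) x 1.
  by move=> x0; case: (drv_sum (fun k => drv_pow 2 (drv_of (proj1 (Hu _ x0 k))))).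
rewrite -sqnorm_at0; apply: derive0_const; first exact: ltW.
  apply: derivable_oo_LRcontinuous_within; split.
  - by move=> x; rewrite in_itv /= => /andP[x0 _]; exact: Dsq.
  - exact: sqnorm_cvg0.
  - exact: cvg_at_left_filter (derivable_cont (Dsq _ c0)).
move=> x /andP[x0 xc]; apply: (sqnorm_derive L A b r u L2 Hu x x0).
by apply: positive_norm2; apply: Pbelow; rewrite ltW.
Qed.

(* Positivity passes to the limit from the left: just before [c] the state is
   on the unit sphere, where [r] and [u_i] solve linear equations. *)
Lemma positive_left (c : R) : 0 < c ->
  (forall s, 0 <= s < c -> positive_state s) -> positive_state c.
Proof.
move=> c0 Pbelow.
have c2 : 0 < c / 2 by rewrite divr_gt0.
have c2c : c / 2 < c by rewrite ltr_pdivrMr // ltr_pMr // ltr1n.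
have sphere s : c / 2 < s < c -> 0 < s /\ sqnorm u s = 1.
  case/andP=> c2s sc; have s0 : 0 < s := lt_trans c2 c2s.
  split=> //; apply: sphere_before => // s' /andP[s'0 s's].
  by apply: Pbelow; rewrite s'0 (lt_trans s's sc).
have pos s : c / 2 <= s < c -> positive_state s.
  by case/andP=> c2s sc; apply: Pbelow; rewrite sc ltW // (lt_le_trans c2 c2s).
have cont (f : R -> R) :
    (forall s, 0 < s -> derivable f s 1) -> {within `[c / 2, c], continuous f}.
  move=> Df; apply: derivable_within_continuous => x.
  by rewrite in_itv /= => /andP[c2x _]; apply: Df; exact: (lt_le_trans c2 c2x).
split.
- apply: (positivity_persists _ (radius_rate L A b r u) _ _ c2c).
  + by apply: cont => s s0; case: (Hr _ s0).
  + by apply: cont => s s0; exact: radius_rate_derivable.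
  + by move=> s /sphere [s0 S1]; case: (sphere_rates L A b r u L2 Hr Hu _ s0 S1).
  + by move=> s /pos [].
- move=> i; apply: (positivity_persists (fun t => u t i 0) (coord_rate L A b r u i) _ _ c2c).
  + by apply: cont => s s0; case: (Hu _ s0 i).
  + by apply: cont => s s0; exact: coord_rate_derivable.
  + by move=> s /sphere [s0 S1]; case: (sphere_rates L A b r u L2 Hr Hu _ s0 S1) => _ /(_ i).
  + by move=> s /pos [_ /(_ i)].
Qed.

Lemma flow_positive {t : R} : 0 <= t -> positive_state t.
Proof.
apply: continuous_induction => //; first exact: positive_right.
exact: positive_left.
Qed.

Lemma flow_sphere {t : R} : 0 < t -> sqnorm u t = 1.
Proof. by move=> t0; apply: sphere_before => // s /andP[s0 _]; exact: flow_positive. Qed.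

Lemma bregman_flow_derive (z : 'cV[R]_N) {t : R} : 0 < t ->
  is_derive t 1 (fun s => bregman L z (epow L (wn (r s) (u s))))
    (- r t ^+ 2 * \sum_i backprop L A b (r t *: u t) i * (epow L (r t *: u t) i 0 - z i 0)).
Proof.
move=> t0.
have Hnear : \forall s \near t, \sum_i breg L (z i 0) (epow L (r s *: u s) i 0)
                              = bregman L z (epow L (wn (r s) (u s))).
  near=> s; have s0 : 0 < s by near: s; exact: near_pos.
  have [rs us] := flow_positive (ltW s0).
  rewrite wn_sphere ?norm2_sqnorm ?flow_sphere ?sqrtr1 // bregman_sum // => i.
  by rewrite !mxE exprn_gt0 ?mulr_gt0.
have [rt ut] := flow_positive (ltW t0).
apply: drv_near Hnear _; rewrite big_distrr /=; apply: drv_sum => i.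
exact: (breg_flow_derive L A b r u L2 Hr Hu _ _ t0 (flow_sphere t0)).
Unshelve. all: by end_near. Qed.

End Invariant.

Theorem mainTheorem17 (R : realType) (M N L : nat) (A : 'M[R]_(M, N)) (b : 'cV[R]_M)
  (r : R -> R) (u : R -> 'cV[R]_N) :
  (2 <= L)%N ->
  (* weight-normalized gradient flow, eta_r(t) = r(t)^2, eta_u = 1, for t > 0 *)
  (forall t : R, 0 < t ->
     derivable r t 1 /\
     derive1 r t = - (r t ^+ 2 * grad_r L A b (r t) (u t))) ->
  (forall t : R, 0 < t -> forall i : 'I_N,
     derivable (fun s => u s i 0) t 1 /\
     derive1 (fun s => u s i 0) t = - grad_u L A b (r t) (u t) i) ->
  (* the trajectory starts at (r(0), u(0)) *)
  r x @[x --> 0^'+] --> r 0 ->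
  (forall i : 'I_N, u x i 0 @[x --> 0^'+] --> u 0 i 0) ->
  0 < r 0 ->
  (forall i : 'I_N, 0 < u 0 i 0) ->
  norm2 (u 0) = 1 ->
  forall z : 'cV[R]_N, (forall i : 'I_N, 0 <= z i 0) -> A *m z = b ->
  forall t : R, 0 < t ->
    derivable (fun s => bregman L z (epow L (wn (r s) (u s)))) t 1 /\
    derive1 (fun s => bregman L z (epow L (wn (r s) (u s)))) t
      = - (2 * L%:R * norm2 (wn (r t) (u t)) ^+ 2 * loss L A b (wn (r t) (u t))).
Proof.
move=> L2 Hr Hu Hr0 Hu0 r0 u0 un z _ Az t t0.
have [Dd ->] := drv_val (bregman_flow_derive L A b r u L2 Hr Hu Hr0 Hu0 r0 u0 un z t0).
split=> //.
(* ... which is r^2 ||A x^L - b||^2 since A z = b, and ||x|| = r on the sphere. *)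
have n1 : norm2 (u t) = 1.
  by rewrite norm2_sqnorm (flow_sphere L A b r u L2 Hr Hu Hr0 Hu0 r0 u0 un t0) sqrtr1.
have Ln0 : (L%:R : R) != 0 by rewrite pnatr_eq0 -lt0n ltnW.
under eq_bigr do rewrite mxE.
rewrite backprop_pairing // wn_sphere // lossE norm2Z_sqr n1 expr1n mulr1.
by field.
Qed.
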